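(* Let $K$ be a compact Hausdorff space. If $C(K)$ has the ball fixed point property, then $K$ is an $F$-space.
   Context: $C(K)$ is the real Banach space of continuous functions $K\to\mathbb{R}$ with the sup norm. A real Banach space $X$ has the ball fixed point property (BFPP) if every nonexpansive map $T\colon B_X\to B_X$ (i.e. $\|Tx-Ty\|\le\|x-y\|$) has a fixed point, where $B_X$ is the closed unit ball. A compact space $K$ is an $F$-space if for every $g\in C(K)$ there exists a continuous $f\colon K\to[-1,1]$ with $g\cdot f=|g|$ (equivalently, disjoint cozero sets of $K$ have disjoint closures). *)

From HB Require Import structures.
From mathcomp Require Import all_boot all_order all_algebra.
From mathcomp Require Import all_classical all_reals all_analysis.
Import numFieldNormedType.Exports.
Import Order.TTheory GRing.Theory Num.Theory.
Local Open Scope classical_set_scope.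
Local Open Scope ring_scope.

Definition supnorm {R : realType} {K : topologicalType} (f : K -> R) : R :=
  sup [set `|f x| | x in [set: K]].

Definition CK_ball (R : realType) (K : topologicalType) : set (K -> R) :=
  [set f : K -> R | continuous f /\ supnorm f <= 1].

(* A map B -> B is represented by a
   function on all of K -> R, constrained only on the ball. *)
Definition CK_BFPP (R : realType) (K : topologicalType) : Prop :=
  forall T : (K -> R) -> (K -> R),
    (forall f, CK_ball R K f -> CK_ball R K (T f)) ->
    (forall f g, CK_ball R K f -> CK_ball R K g ->
       supnorm (T f - T g) <= supnorm (f - g)) ->
    exists f, CK_ball R K f /\ T f = f.

Definition F_space (R : realType) (K : topologicalType) : Prop :=
  forall g : K -> R, continuous g ->
    exists f : K -> R, continuous f /\ (forall x, -1 <= f x <= 1) /\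
      (forall x, g x * f x = `|g x|).

From HB Require Import structures.
From mathcomp Require Import all_boot all_order all_algebra.
From mathcomp Require Import all_classical all_reals all_analysis.
From mathcomp Require Import lra.
Import numFieldNormedType.Exports.
Import Order.TTheory GRing.Theory Num.Theory.
Local Open Scope classical_set_scope.
Local Open Scope ring_scope.

(* Given g in C(K), let clip truncate reals to [-1, 1]. The map
   f |-> clip (f + g) sends the unit ball of C(K) into itself and is
   nonexpansive, since clip is 1-Lipschitz. A fixed point f = clip (f + g)
   must equal 1 where g > 0 and -1 where g < 0, hence g f = |g|. *)

Section Clip.
Context {R : realType}.
Implicit Types u v : R.

Definition clip u : R := Num.max (-1) (Num.min 1 u).

Lemma clipE u :
  [\/ u <= -1 /\ clip u = -1, -1 <= u <= 1 /\ clip u = u | 1 <= u /\ clip u = 1].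
Proof.
rewrite /clip; case: (leP 1 u) => u1; case: (leP (-1) u) => u2;
  rewrite ?(minEle, maxEle) /=; repeat case: ifP => ?;
  by [apply: Or31; split; lra | apply: Or32; split; lra | apply: Or33; split; lra | lra].
Qed.

Lemma clip_norm_le1 u : `|clip u| <= 1.
Proof. by rewrite ler_norml; case: (clipE u) => -[? ->]; lra. Qed.

Lemma clip_dist u v : `|clip u - clip v| <= `|u - v|.
Proof.
wlog uv : u v / u <= v.
  move=> H; have [/H //|/ltW/H] := leP u v.
  by rewrite distrC [`|v - u|]distrC.
rewrite distrC [`|u - v|]distrC !ger0_norm ?subr_ge0 //;
  by case: (clipE u) => -[? ->]; case: (clipE v) => -[? ->]; lra.
Qed.

Lemma clip_fixpoint_mul u v : clip (u + v) = u -> v * u = `|v|.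
Proof.
move=> fix_u; have [v0|v0|->] := ltgtP v 0; last by rewrite mul0r normr0.
- suff -> : u = -1 by rewrite mulrN1 ltr0_norm.
  by move: fix_u; case: (clipE (u + v)) => -[? ->]; lra.
- suff -> : u = 1 by rewrite mulr1 gtr0_norm.
  by move: fix_u; case: (clipE (u + v)) => -[? ->]; lra.
Qed.

End Clip.

Lemma continuous_clip (R : realType) (K : topologicalType) (f : K -> R) :
  continuous f -> continuous (clip \o f).
Proof.
move=> cf x; apply: (@continuous_max R K (cst (-1)) (cst 1 \min f)).
  exact: cst_continuous.
by apply: continuous_min; [exact: cst_continuous | exact: cf].
Qed.

Section Supnorm.
Variables (R : realType) (K : topologicalType).
Implicit Types h : K -> R.

Lemma supnorm_ge0 h : 0 <= supnorm h.
Proof.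
rewrite /supnorm.
have [[[_ [x _ _]] ubh]|/sup_out -> //] :=
  pselect (has_sup [set `|h x| | x in [set: K]]).
apply: le_trans (normr_ge0 (h x)) _; apply: ub_le_sup ubh _ _; by exists x.
Qed.

Lemma supnorm_le h c : 0 <= c -> (forall x, `|h x| <= c) -> supnorm h <= c.
Proof.
move=> c0 hc; rewrite /supnorm.
have [->|/set0P ne] := eqVneq [set `|h x| | x in [set: K]] set0; first by rewrite sup0.
by apply: ge_sup ne _ => _ [x _ <-].
Qed.

Hypothesis compactK : compact [set: K].

Lemma le_supnorm h x : continuous h -> `|h x| <= supnorm h.
Proof.
move=> ch; apply: ub_le_sup; last by exists x.
apply: (compact_has_sup _ _).2; first by exists `|h x|, x.
apply: (@continuous_compact _ _ (Num.norm \o h)) => //.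
apply: continuous_subspaceT => y.
apply: continuous_comp; [exact: ch | exact: norm_continuous].
Qed.

Lemma supnorm_le_supnorm h1 h2 :
  continuous h2 -> (forall x, `|h1 x| <= `|h2 x|) -> supnorm h1 <= supnorm h2.
Proof.
move=> ch2 le12; apply: supnorm_le; first exact: supnorm_ge0.
by move=> x; apply: le_trans (le12 x) (le_supnorm h2 x ch2).
Qed.

End Supnorm.

Section ClipShift.
Variables (R : realType) (K : topologicalType) (g : K -> R).
Hypotheses (compactK : compact [set: K]) (cont_g : continuous g).

Lemma clip_shift_ball f : CK_ball R K f -> CK_ball R K (clip \o (f + g)).
Proof.
move=> [cf _]; split; last by apply: supnorm_le => // x; exact: clip_norm_le1.
by apply: continuous_clip => x; apply: continuousD; [exact: cf | exact: cont_g].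
Qed.

Lemma clip_shift_nonexpansive f h : continuous f -> continuous h ->
  supnorm ((clip \o (f + g)) - (clip \o (h + g))) <= supnorm (f - h).
Proof.
move=> cf ch; apply: supnorm_le_supnorm => //= [x|x].
  by apply: continuousB; [exact: cf | exact: ch].
by have := clip_dist (f x + g x) (h x + g x); rewrite opprD addrACA subrr addr0.
Qed.

End ClipShift.

Theorem mainTheorem2 (R : realType) (K : topologicalType) :
  compact [set: K] -> hausdorff_space K -> CK_BFPP R K -> F_space R K.
Proof.
move=> compactK _ bfpp g cont_g.
have [f [[cf _] fix_f]] : exists f, CK_ball R K f /\ clip \o (f + g) = f.
  apply: bfpp => [f|f h [cf _] [ch _]]; first exact: clip_shift_ball.
  exact: clip_shift_nonexpansive.
have fix_fx x : clip (f x + g x) = f x := congr1 (@^~ x) fix_f.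
exists f; split=> //; split=> x; last exact: clip_fixpoint_mul.
by rewrite -ler_norml -fix_fx clip_norm_le1.
Qed.
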